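(* Let $D$ be a division ring with center $F$. Then either $D$ has a maximal subring, or no element $\alpha\in D\setminus F$ is algebraic over $F$.
   Context: All rings are associative unital and subrings share the identity. A maximal subring of a ring $T$ is a proper subring maximal under inclusion among proper subrings of $T$. *)

From HB Require Import structures.
From mathcomp Require Import all_boot all_order all_algebra.
Set Implicit Arguments. Unset Strict Implicit. Unset Printing Implicit Defensive.
Import GRing.Theory.
Local Open Scope ring_scope.

Definition is_division_ring (D : unitRingType) : Prop :=
  forall x : D, x != 0 -> x \is a GRing.unit.

Definition central (R : nzRingType) (x : R) : Prop := forall y : R, x * y = y * x.

Definition is_subring (R : nzRingType) (S : R -> Prop) : Prop :=
  [/\ S 1,
      (forall x y, S x -> S y -> S (x - y)) &
      (forall x y, S x -> S y -> S (x * y))].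

Definition proper_subset (R : Type) (S : R -> Prop) : Prop := exists x, ~ S x.

Definition is_maximal_subring (R : nzRingType) (S : R -> Prop) : Prop :=
  [/\ is_subring S, proper_subset S &
      forall T : R -> Prop, is_subring T -> proper_subset T ->
        (forall x, S x -> T x) -> forall x, T x -> S x].

Definition algebraic_over_center (R : nzRingType) (a : R) : Prop :=
  exists p : {poly R}, [/\ p != 0, (forall i, central p`_i) & p.[a] = 0].

(* Let a be a noncentral root of a nonzero polynomial p of degree d with
   central coefficients, and let C be the centralizer of a, a proper
   sub-division ring of D.  Any m > d elements x_j of D are right dependent
   over C: the system sum_j x_j a^i c_j = 0 (i < d) has a nonzero solution
   c, which also satisfies the equation for i = d because p(a) = 0; hence
   the solutions are stable under c |-> a c - c a, and a solution of minimal
   support normalised to have a coefficient 1 is killed by this map, i.e.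
   has all its coefficients in C.  So D is a finitely generated right
   C-module, and Zorn's lemma gives a maximal subring containing C: the
   union of a chain of proper subrings containing C is proper, for otherwise
   the finitely many generators would lie in a single member of the chain. *)

From HB Require Import structures.
From mathcomp Require Import all_boot all_order all_algebra.
From mathcomp Require Import boolp classical_sets.
Set Implicit Arguments. Unset Strict Implicit. Unset Printing Implicit Defensive.
Import GRing.Theory.
Local Open Scope ring_scope.
Local Open Scope classical_set_scope.

Section Chains.
Variables (T : Type) (F : set (set T)).
Hypothesis F_total : total_on F subset.

Lemma total_on_subset_join X Y :
  F X -> F Y -> exists2 Z, F Z & X `<=` Z /\ Y `<=` Z.
Proof.
move=> FX FY; have [XY|YX] := F_total FX FY.
- by exists Y => //; split.
- by exists X => //; split.
Qed.

Lemma total_on_subset_common X0 n (f : nat -> T) : F X0 ->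
  (forall k, (k < n)%N -> (\bigcup_(X in F) X) (f k)) ->
  exists2 X, F X & forall k, (k < n)%N -> X (f k).
Proof.
move=> FX0; elim: n => [|n IH] fF; first by exists X0.
have [X FX Xf] := IH (fun k kn => fF k (ltnW kn)).
have [Y FY Yfn] := fF n (ltnSn n).
have [Z FZ [XZ YZ]] := total_on_subset_join FX FY.
exists Z => // k; rewrite ltnS leq_eqVlt => /predU1P[->|kn]; [exact: YZ | exact/XZ/Xf].
Qed.

End Chains.

Lemma Zorn_bigcup_nonempty T (P : set (set T)) (A0 : set T) : P A0 ->
  (forall F : set (set T), F `<=` P -> F !=set0 -> total_on F subset ->
     P (\bigcup_(X in F) X)) ->
  exists A, P A /\ forall B, A `<` B -> ~ P B.
Proof.
move=> PA0 chainP.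
(* set0 is adjoined so that the empty chain has an upper bound. *)
have [F FP0 Ftot|A [P0A Amax]] := @Zorn_bigcup _ (P `|` [set set0]).
  have [[X [FX PX]]|noP] := pselect (exists X, F X /\ P X).
    have -> : \bigcup_(Y in F) Y = \bigcup_(Y in F `&` P) Y.
      apply/seteqP; split=> t [Y FY Yt]; last by exists Y => //; case: FY.
      by exists Y => //; split=> //; case: (FP0 Y FY) => // Y0; rewrite Y0 in Yt.
    left; apply: chainP; first by move=> ? [].
      by exists X.
    by move=> Y Z [FY _] [FZ _]; apply: Ftot.
  right; apply/seteqP; split=> // t [Y FY Yt] /=.
  by case: (FP0 Y FY) => [PY|Y0]; [apply: noP; exists Y | rewrite Y0 in Yt].
exists A; split=> [|B AB PB]; last by apply: (Amax B AB); left.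
case: P0A => // /= A_0; subst A.
have [A0_0|A0_neq0] := pselect (A0 `<=` set0).
  by rewrite subset0 in A0_0; rewrite -A0_0.
by exfalso; apply: (Amax A0); [split=> // ? [] | left].
Qed.

Section Subrings.
Variables (R : nzRingType) (S : R -> Prop).
Hypothesis S_subring : is_subring S.

Lemma subring0 : S 0.
Proof. by case: S_subring => S1 SB _; rewrite -(subrr 1); apply: SB. Qed.

Lemma subringN x : S x -> S (- x).
Proof.
by case: S_subring => _ SB _ Sx; rewrite -sub0r; apply: SB => //; apply: subring0.
Qed.

Lemma subringD x y : S x -> S y -> S (x + y).
Proof. by case: S_subring => _ SB _ Sx Sy; rewrite -[y]opprK; apply/SB/subringN. Qed.

Lemma subring_sum n (f : 'I_n -> R) : (forall k, S (f k)) -> S (\sum_(k < n) f k).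
Proof. by move=> Sf; apply: (big_ind S) => //; [apply: subring0 | apply: subringD]. Qed.

End Subrings.

Lemma bigcup_chain_subring (R : nzRingType) (F : set (set R)) :
  (forall S, F S -> is_subring S) -> F !=set0 -> total_on F subset ->
  is_subring (\bigcup_(S in F) S).
Proof.
move=> Fsub [S0 FS0] Ftot.
have common x y : (\bigcup_(S in F) S) x -> (\bigcup_(S in F) S) y ->
    exists2 S, F S & S x /\ S y.
  move=> [X FX Xx] [Y FY Yy]; have [Z FZ [XZ YZ]] := total_on_subset_join Ftot FX FY.
  by exists Z => //; split; [apply: XZ | apply: YZ].
split.
- by exists S0 => //; case: (Fsub S0 FS0).
- move=> x y /common /[apply] -[S FS [Sx Sy]].
  by exists S => //; case: (Fsub S FS) => _ SB _; apply: SB.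
- move=> x y /common /[apply] -[S FS [Sx Sy]].
  by exists S => //; case: (Fsub S FS) => _ _ SM; apply: SM.
Qed.

Section RightSpan.
Variables (R : nzRingType) (C : R -> Prop).

Definition rspan r (y : nat -> R) (z : R) :=
  exists2 c : nat -> R, (forall k, (k < r)%N -> C (c k)) & z = \sum_(k < r) y k * c k.

Definition rdependent m (x : nat -> R) :=
  exists c : nat -> R, [/\ forall j, (j < m)%N -> C (c j),
    exists2 j, (j < m)%N & c j != 0 & \sum_(j < m) x j * c j = 0].

Lemma subring_rspan (S : R -> Prop) r y z : is_subring S -> C `<=` S ->
  (forall k, (k < r)%N -> S (y k)) -> rspan r y z -> S z.
Proof.
move=> S_subring CS Sy [c Cc ->]; apply: subring_sum => // k.
by case: S_subring => _ _ SM; apply: SM; [apply: Sy | apply/CS/Cc].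
Qed.

Lemma maximal_subring_of_finite_rspan r y : is_subring C -> proper_subset C ->
  (forall z, rspan r y z) -> exists S : R -> Prop, is_maximal_subring S.
Proof.
move=> C_subring C_proper spanR.
pose P S := [/\ is_subring S, proper_subset S & C `<=` S].
have [F FP [S0 FS0] Ftot|M [[M_subring M_proper CM] Mmax]] :=
    Zorn_bigcup_nonempty (P := P) (And3 C_subring C_proper (@subset_refl _ C)).
  split.
  - by apply: bigcup_chain_subring => //; [move=> S /FP[] | exists S0].
  - apply: contrapT => /existsNP/contrapT allR.
    have [S FS Sy] :=
      total_on_subset_common (n := r) (f := y) Ftot FS0 (fun k _ => allR (y k)).
    have [S_subring [z Sz] CS] := FP S FS.
    by apply/Sz/(subring_rspan S_subring CS Sy).
  - by move=> z Cz; exists S0 => //; have [_ _] := FP S0 FS0; apply.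
exists M; split=> // T T_subring T_proper MT z Tz.
apply: contrapT => Mz; apply: (Mmax T); last by split=> // w /CM /MT.
by split=> // TM; apply/Mz/TM.
Qed.

End RightSpan.

Lemma big_ord_bump (V : nmodType) m j0 (f : nat -> V) : (j0 < m.+1)%N ->
  \sum_(j < m.+1) f j = f j0 + \sum_(k < m) f (bump j0 k).
Proof. by move=> j0m; rewrite (bigD1_ord (Ordinal j0m)). Qed.

Section DivisionRing.
Variable D : unitRingType.
Hypothesis D_division : is_division_ring D.

Lemma homogeneous_system_nontrivial n m (a : nat -> nat -> D) : (n < m)%N ->
  exists2 c : nat -> D, exists2 j, (j < m)%N & c j != 0 &
    forall i, (i < n)%N -> \sum_(j < m) a i j * c j = 0.
Proof.
elim: n m a => [|n IH] m a nm.
  by exists (fun _ => 1) => //; exists 0%N; rewrite ?oner_neq0.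
have [[j0 j0m a_j0]|no_pivot] :=
  pselect (exists2 j0, (j0 < m)%N & a n j0 != 0); last first.
  have [c c_neq0 c_sol] := IH m a (ltnW nm).
  exists c => // i; rewrite ltnS leq_eqVlt => /predU1P[->|]; last exact: c_sol.
  apply: big1 => j _; have [->|a_j] := eqVneq (a n j) 0; first by rewrite mul0r.
  by case: no_pivot; exists j.
case: m nm j0m => // m nm j0m.
(* Gaussian elimination of the unknown j0 using the pivot a n j0. *)
pose u := (a n j0)^-1.
have a_u : a n j0 * u = 1 by apply/mulrV/D_division.
pose b i k := a i (bump j0 k) - a i j0 * u * a n (bump j0 k).
have [d [k0 k0m d_k0] d_sol] := IH m b nm.
pose s i := \sum_(k < m) a i (bump j0 k) * d k.
pose c j := if j == j0 then - u * s n else d (unbump j0 j).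
have c_bump k : c (bump j0 k) = d k by rewrite /c eq_sym (negbTE (neq_bump _ _)) bumpK.
exists c.
  exists (bump j0 k0); last by rewrite c_bump.
  by rewrite /bump; case: (j0 <= k0)%N; rewrite ?add1n ?addn0 // ltnW.
move=> i; rewrite (big_ord_bump (fun j => a i j * c j) j0m).
under eq_bigr do rewrite c_bump.
rewrite -/(s i) /c eqxx ltnS leq_eqVlt => /predU1P[->|lt_in].
  by rewrite mulNr mulrN mulrA a_u mul1r addNr.
have := d_sol i lt_in; under eq_bigr do rewrite mulrBl -!mulrA.
rewrite sumrB -!mulr_sumr -/(s i) -/(s n) => /eqP; rewrite subr_eq0 => /eqP ->.
by rewrite mulNr mulrN mulrA addNr.
Qed.

Lemma last_true_before (P : nat -> Prop) n : P 0 -> ~ P n -> exists k, P k /\ ~ P k.+1.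
Proof.
move=> P0; elim: n => [|n IH] Pn //.
by have [Pn'|/IH] := pselect (P n); first by exists n.
Qed.

Section RightSpanDivision.
Variable C : D -> Prop.
Hypotheses (CM : forall a b, C a -> C b -> C (a * b)) (CN : forall a, C a -> C (- a))
  (CV : forall a, C a -> C a^-1).

Lemma rindependent_adjoin r y z : ~ rdependent C r y -> ~ rspan C r y z ->
  ~ rdependent C r.+1 (fun k => if k == r then z else y k).
Proof.
move=> y_indep z_notin [c [Cc [j jr c_j] sum0]].
rewrite big_ord_recr /= eqxx in sum0.
rewrite (eq_bigr (fun k : 'I_r => y k * c k)) in sum0 => [|k _]; last by rewrite ltn_eqF.
have [c_r|c_r] := eqVneq (c r) 0.
  apply: y_indep; exists c; split=> [k kr||]; first exact/Cc/ltnW.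
    exists j => //; move: jr c_j.
    by rewrite ltnS leq_eqVlt => /predU1P[->|]; rewrite ?c_r ?eqxx.
  by rewrite c_r mulr0 addr0 in sum0.
apply: z_notin; exists (fun k => - c k * (c r)^-1) => [k kr|].
  by apply: CM; [apply/CN/Cc/ltnW | apply/CV/Cc].
have c_r_unit : c r \is a GRing.unit by apply: D_division.
move/eqP: sum0; rewrite addrC addr_eq0 => /eqP z_c_r.
rewrite -(mulrK c_r_unit z) z_c_r mulNr mulr_suml -sumrN; apply: eq_bigr => k _.
by rewrite mulNr mulrN mulrA.
Qed.

Lemma finite_rspan_of_bounded_rdependent d :
  (forall m x, (d < m)%N -> rdependent C m x) -> exists r y, forall z, rspan C r y z.
Proof.
move=> dep.
have [r [[y y_indep] no_ext]] :
    exists r, (exists y, ~ rdependent C r y) /\ ~ (exists y, ~ rdependent C r.+1 y).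
  apply: (last_true_before (n := d.+1)); first by exists (fun _ => 0) => -[c [_ []]].
  by case=> y; apply; apply: dep.
exists r, y => z; apply: contrapT => z_notin; apply: no_ext.
by exists (fun k => if k == r then z else y k); apply: rindependent_adjoin.
Qed.

End RightSpanDivision.

Section Centralizer.
Variables (al : D) (p : {poly D}).
Hypotheses (p_neq0 : p != 0) (p_central : forall i, central p`_i) (p_root : p.[al] = 0).
Variables (m : nat) (x : nat -> D).

Let d := (size p).-1.
Let moment (c : nat -> D) i := \sum_(j < m) x j * al ^+ i * c j.
Let solves c := forall i, (i < d)%N -> moment c i = 0.

Lemma moment_deg c : solves c -> moment c d = 0.
Proof.
move=> c_sol.
have size_p : size p = d.+1 by rewrite /d prednK // lt0n size_poly_eq0.
have lead_unit : p`_d \is a GRing.unit.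
  by apply: D_division; rewrite -lead_coefE lead_coef_eq0.
have : \sum_(i < size p) p`_i * moment c i = 0.
  transitivity (\sum_(j < m) x j * p.[al] * c j).
    under eq_bigr do rewrite mulr_sumr.
    rewrite exchange_big /=; apply: eq_bigr => j _.
    rewrite horner_coef mulr_sumr mulr_suml; apply: eq_bigr => i _.
    by rewrite !mulrA p_central.
  by rewrite p_root; apply: big1 => j _; rewrite mulr0 mul0r.
rewrite size_p big_ord_recr /= big1 ?add0r => [moment_d|i _]; last first.
  by rewrite c_sol // mulr0.
by rewrite -(mulKr lead_unit (moment c d)) moment_d mulr0.
Qed.

Lemma solves_moment c i : solves c -> (i <= d)%N -> moment c i = 0.
Proof.
by move=> c_sol; rewrite leq_eqVlt => /predU1P[->|/c_sol//]; apply: moment_deg.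
Qed.

Lemma solves_mulr c v : solves c -> solves (fun j => c j * v).
Proof.
move=> c_sol i lt_id; rewrite /moment.
under eq_bigr do rewrite mulrA.
by rewrite -mulr_suml -/(moment c i) c_sol ?mul0r.
Qed.

Lemma solves_commutator c : solves c -> solves (fun j => al * c j - c j * al).
Proof.
move=> c_sol i lt_id.
have -> : moment (fun j => al * c j - c j * al) i = moment c i.+1 - moment c i * al.
  rewrite /moment mulr_suml -sumrB; apply: eq_bigr => j _.
  by rewrite mulrBr exprSr !mulrA.
by rewrite !solves_moment ?mul0r ?subr0 // ltnW.
Qed.

Lemma solves_centralizing c j0 : (j0 < m)%N -> c j0 != 0 -> solves c ->
  exists c', [/\ forall j, (j < m)%N -> GRing.comm al (c' j),
    exists2 j, (j < m)%N & c' j != 0 & solves c'].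
Proof.
move: {2}_.+1 (ltnSn #|[pred j : 'I_m | c j != 0]|) => k.
elim: k c j0 => // k IH c j0 card_c j0m c_j0 c_sol.
pose c1 j := c j * (c j0)^-1.
pose c2 j := al * c1 j - c1 j * al.
have c1_j0 : c1 j0 = 1 by apply/mulrV/D_division.
(* c2 vanishes at j0 and wherever c does, so it has smaller support unless it is 0. *)
have [[j1 j1m c2_j1]|c2_0] := pselect (exists2 j, (j < m)%N & c2 j != 0).
  apply: (IH c2 j1) => //; last exact/solves_commutator/solves_mulr.
  rewrite -ltnS (leq_trans _ card_c) // ltnS; apply/proper_card/properP; split.
    apply/fintype.subsetP => j; rewrite !inE; apply: contra => /eqP c_j.
    by rewrite /c2 /c1 c_j !mul0r mulr0 subrr.
  by exists (Ordinal j0m); rewrite !inE /= ?c_j0 // /c2 c1_j0 mulr1 mul1r subrr eqxx.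
exists c1; split; last exact: solves_mulr.
  move=> j jm; apply/eqP; rewrite -subr_eq0; apply/negPn/negP => c2_j.
  by apply: c2_0; exists j.
by exists j0; rewrite // c1_j0 oner_neq0.
Qed.

Lemma centralizer_rdependent : (d < m)%N -> rdependent (GRing.comm al) m x.
Proof.
move=> dm; have [c [j0 j0m c_j0] c_sol] :=
  homogeneous_system_nontrivial (fun i j => x j * al ^+ i) dm.
have [c' [c'_comm c'_neq0 c'_sol]] := solves_centralizing j0m c_j0 c_sol.
exists c'; split=> //; rewrite -[RHS](solves_moment (i := 0) c'_sol) //.
by apply: eq_bigr => j _; rewrite expr0 mulr1.
Qed.

End Centralizer.

End DivisionRing.

Theorem corollary2p10 (D : unitRingType) (hD : is_division_ring D) :
  (exists S : D -> Prop, is_maximal_subring S) \/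
  (forall a : D, ~ central a -> ~ algebraic_over_center a).
Proof.
have [[al [al_noncentral [p [p_neq0 p_central p_root]]]]|no_al] :=
  pselect (exists al : D, ~ central al /\ algebraic_over_center al); last first.
  by right=> a a_noncentral a_alg; apply: no_al; exists a.
left.
have Cal_subring : is_subring (GRing.comm al).
  by split=> [|a b|a b]; [exact: commr1 | exact: commrB | exact: commrM].
have Cal_proper : proper_subset (GRing.comm al) by apply/existsNP.
have [r [y spanD]] := finite_rspan_of_bounded_rdependent hD (@commrM _ al)
  (@commrN _ al) (@commrV _ al) (centralizer_rdependent hD p_neq0 p_central p_root).
exact: maximal_subring_of_finite_rspan Cal_subring Cal_proper spanD.
Qed.
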